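(* Let $C_8$ be the configuration with lines $l_0,\dots,l_7$ and points $p_{012},p_{034},p_{056},p_{07},p_{135},p_{147},p_{16},p_{23},p_{246},p_{257},p_{367},p_{45}$, where $p_{ijk}$ is incident exactly to $l_i,l_j,l_k$ and $p_{ij}$ exactly to $l_i,l_j$. Let $\mathcal{P}_0$ be the set of its points not incident to $l_0$, $\mathcal{A}=\{(i,p)\in\{1,\dots,7\}\times\mathcal{P}_0:p\prec l_i\}$. Let $L=\bigoplus_k L_k$ be the free Lie algebra over $\mathbb{Z}$ on $x_1,\dots,x_7$, $H=L_1$, $S_p=\sum_{j:\,p\prec l_j}x_j$, $R_2\subset L_2$ the subgroup with $\mathbb{Z}$-basis $\bar r(i,p)=[x_i,S_p]$ for $(i,p)\in\mathcal{A}$, $i\ne\min\{j:l_j\succ p\}$, $R_3=[H,R_2]$, $P_3=L_3/R_3$, $A=H^{\mathcal{A}}$, and $\tilde\tau:A\to\mathrm{Hom}(R_2,P_3)$ defined by $\tilde\tau a(\bar r(i,p))=[[x_i,a(i,p)],S_p]+[x_i,\sum_{j:\,p\prec l_j}[x_j,a(j,p)]]+R_3$. Let $U\subseteq A$ be the subgroup generated by $a^{(0)}_{i,p}$ ($(i,p)\in\mathcal{A}$), $a^{(0)}_{i,p}(j,q)=\delta_{i,j}\delta_{p,q}x_i$; $a^{(1)}_{i,p}$ ($1\le i\le7$, $p\in\mathcal{P}_0$), $a^{(1)}_{i,p}(j,q)=\delta_{p,q}x_i$; and $a^{(2)}_{i,p_1,p_2}$ ($1\le i\le 7$, $p_1,p_2\in\mathcal{P}_0$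 incident to $l_i$), $a^{(2)}_{i,p_1,p_2}(j,q)=\delta_{i,j}\delta_{p_1,q}S_{p_2}$. Then $U=\ker\tilde\tau$.
   Context: Incidence of a point $p$ and line $l$ is written $p\prec l$ or $l\succ p$. The elements $\bar r(i,p)$ listed are linearly independent in $L_2$, so $\tilde\tau$ is well defined by its values on them. *)

From mathcomp Require Import all_boot all_order all_algebra.
Set Implicit Arguments. Unset Strict Implicit. Unset Printing Implicit Defensive.
Import Order.TTheory GRing.Theory Num.Theory.
Local Open Scope ring_scope.

(* Points are 'I_12, in the order
   p012, p034, p056, p07, p135, p147, p16, p23, p246, p257, p367, p45;
   point number n is incident exactly to the lines listed in nth n pts_lines. *)
Definition pts_lines : seq (seq nat) :=
  [:: [:: 0; 1; 2]; [:: 0; 3; 4]; [:: 0; 5; 6]; [:: 0; 7];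
      [:: 1; 3; 5]; [:: 1; 4; 7]; [:: 1; 6];    [:: 2; 3];
      [:: 2; 4; 6]; [:: 2; 5; 7]; [:: 3; 6; 7]; [:: 4; 5]]%N.

Definition line := 'I_8.
Definition point := 'I_12.

Definition inc (p : point) (l : line) : bool := (nat_of_ord l \in nth [::] pts_lines p).

Definition inP0 (p : point) : bool := ~~ inc p ord0.

Definition inA (i : line) (p : point) : bool :=
  [&& (nat_of_ord i != 0)%N, inP0 p & inc p i].

Definition minline (p : point) : nat := \big[minn/8%N]_(j : line | inc p j) nat_of_ord j.

(* The free Lie ring over Z on x_1..x_7 is realised (Magnus/Witt embedding) as
   the Lie subring generated by the letters inside the free associative ring
   Z<X_1..X_7>, with [u,v] = uv - vu.  Elements of the latter are represented
   by their coefficient function on words; generator x_{k+1} is letter k : 'I_7. *)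
Definition word := seq 'I_7.
Definition ncs := word -> int.

Definition ncmul (u v : ncs) : ncs :=
  fun w => \sum_(k < (size w).+1) u (take k w) * v (drop k w).

Definition br (u v : ncs) : ncs := fun w => ncmul u v w - ncmul v u w.

Definition ncadd (u v : ncs) : ncs := fun w => u w + v w.

Definition Hel := 'I_7 -> int.
Definition hv (h : Hel) : ncs := fun w => if w is [:: k] then h k else 0.

Definition gen (k : 'I_7) : ncs := hv (fun j => (j == k)%:R).

Definition xcoef (i : line) : Hel := fun k => (lift ord0 k == i)%:R.
Definition Scoef (p : point) : Hel := fun k => (inc p (lift ord0 k))%:R.

Definition X (i : line) : ncs := hv (xcoef i).
Definition S (p : point) : ncs := hv (Scoef p).

Definition inB (i : line) (p : point) : bool := inA i p && (nat_of_ord i != minline p).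
Definition rbar (i : line) (p : point) : ncs := br (X i) (S p).

Definition inR3 (v : ncs) : Prop :=
  exists c : 'I_7 -> line -> point -> int,
    forall w : word,
      v w = \sum_(k : 'I_7) \sum_(i : line) \sum_(p : point | inB i p)
              c k i p * br (gen k) (rbar i p) w.

(* A = H^A : an element assigns to each (i,p) an element of H
   (only the values at (i,p) in A are relevant) *)
Definition Ael := line -> point -> Hel.

Definition tau_val (a : Ael) (i : line) (p : point) : ncs :=
  ncadd (br (br (X i) (hv (a i p))) (S p))
        (br (X i) (fun w => \sum_(j : line | inc p j) br (X j) (hv (a j p)) w)).

Definition in_ker_tau (a : Ael) : Prop :=
  forall (i : line) (p : point), inB i p -> inR3 (tau_val a i p).

Definition a0 (i : line) (p : point) : Ael :=
  fun j q => fun k => ((j == i) && (q == p))%:R * xcoef i k.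
Definition a1 (i : line) (p : point) : Ael :=
  fun j q => fun k => (q == p)%:R * xcoef i k.
Definition a2 (i : line) (p1 p2 : point) : Ael :=
  fun j q => fun k => ((j == i) && (q == p1))%:R * Scoef p2 k.

Definition inU (a : Ael) : Prop :=
  exists (c0 c1 : line -> point -> int) (c2 : line -> point -> point -> int),
    forall (j : line) (q : point), inA j q -> forall k : 'I_7,
      a j q k =
        \sum_(i : line) \sum_(p : point | inA i p) c0 i p * a0 i p j q k
      + \sum_(i : line | nat_of_ord i != 0%N) \sum_(p : point | inP0 p) c1 i p * a1 i p j q k
      + \sum_(i : line | nat_of_ord i != 0%N)
          \sum_(p1 : point | inP0 p1 && inc p1 i) \sum_(p2 : point | inP0 p2 && inc p2 i)
             c2 i p1 p2 * a2 i p1 p2 j q k.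

(* Everything is computed in the coordinates of L_3 on words of length three (the Magnus
   embedding of Defs).  The map a |-> tilde-tau a is linear and, at a point p, only involves
   the values a(j, p) on the lines l_j through p.  Since the x_j for l_j through p sum to S_p
   and [S_p, S_p] = 0, the relation at the minimal line through p is minus the sum of the
   others; hence R_3 = [H, R_2] contains [h, [x_i, S_p]] for every (i, p) in A, and every
   element of the kernel also satisfies the condition at the minimal lines.

   U is in the kernel: tilde-tau kills a^(0) outright, sends a^(1)_{l,p} to
   -[x_l, [x_i, S_p]] by the Jacobi identity, and a^(2)_{l,p1,p2} to brackets
   [h, [x_l, S_p2]] with h in H.

   The kernel is in U: for each point q of P_0 an integral certificate expresses every
   coordinate of a(., q) through the generators of U, with coefficients that are linear forms
   in a(., q), up to a combination of the forms a |-> phi (tilde-tau a (rbar (i, q))), where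
   phi is a functional on L_3 vanishing on R_3.  These forms vanish on the kernel, and the
   identities between linear forms are checked on a basis by computation. *)

From Pilot Require Import Defs.
From mathcomp Require Import all_boot all_order all_algebra.
From mathcomp Require Import ring.
Set Implicit Arguments. Unset Strict Implicit. Unset Printing Implicit Defensive.
Import GRing.Theory.
Local Open Scope ring_scope.

Section LieCoordinates.
Variables (R : comPzRingType) (T : Type).
Implicit Types (h u v : T -> R) (x y z : T).

(* For u, v, h of degree one: the coefficients of [u, v] at x y and of [h, [u, v]] at x y z. *)
Definition lie2 u v x y : R := u x * v y - v x * u y.
Definition lie3 h u v x y z : R := h x * lie2 u v y z - lie2 u v x y * h z.

Lemma eq_lie3 h h' u u' v v' x y z :
  h =1 h' -> u =1 u' -> v =1 v' -> lie3 h u v x y z = lie3 h' u' v' x y z.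
Proof. by move=> eh eu ev; rewrite /lie3 /lie2 !eh !eu !ev. Qed.

Lemma lie3E h u v x y z :
  lie3 h u v x y z = v x * (u y * h z) - v y * (h x * u z + u x * h z) + v z * (h x * u y).
Proof. by rewrite /lie3 /lie2; ring. Qed.

Lemma lie3_swap h u v x y z : lie3 h u v x y z = - lie3 h v u x y z.
Proof. by rewrite /lie3 /lie2; ring. Qed.

Lemma lie3_same h u x y z : lie3 h u u x y z = 0.
Proof. by rewrite /lie3 /lie2; ring. Qed.

Lemma lie3Z1 c h u v x y z : lie3 (fun k => c * h k) u v x y z = c * lie3 h u v x y z.
Proof. by rewrite /lie3; ring. Qed.

Lemma lie3Z3 c h u v x y z : lie3 h u (fun k => c * v k) x y z = c * lie3 h u v x y z.
Proof. by rewrite /lie3 /lie2; ring. Qed.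

Lemma lie3_sum1 (I : Type) (r : seq I) (P : pred I) (H : I -> T -> R) u v x y z :
  lie3 (fun k => \sum_(t <- r | P t) H t k) u v x y z
  = \sum_(t <- r | P t) lie3 (H t) u v x y z.
Proof. by rewrite /lie3 mulr_suml mulr_sumr -sumrB. Qed.

Lemma lie3_sum3 (I : Type) (r : seq I) (P : pred I) h u (V : I -> T -> R) x y z :
  lie3 h u (fun k => \sum_(t <- r | P t) V t k) x y z
  = \sum_(t <- r | P t) lie3 h u (V t) x y z.
Proof.
rewrite lie3E !mulr_suml -sumrB -big_split /=.
by apply: eq_bigr => t _; rewrite lie3E.
Qed.

Lemma lie3_sum2 (I : Type) (r : seq I) (P : pred I) h (U : I -> T -> R) v x y z :
  lie3 h (fun k => \sum_(t <- r | P t) U t k) v x y z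
  = \sum_(t <- r | P t) lie3 h (U t) v x y z.
Proof.
rewrite lie3_swap lie3_sum3 -sumrN.
by apply: eq_bigr => t _; rewrite lie3_swap opprK.
Qed.

End LieCoordinates.

(** * Degree-three coordinates *)

Definition homogeneous (n : nat) (f : ncs) : Prop := forall w : word, size w != n -> f w = 0.

Lemma homogeneous_hv h : homogeneous 1 (hv h).
Proof. by case=> [|x [|y w]]. Qed.

Lemma homogeneous_ncmul m n f g :
  homogeneous m f -> homogeneous n g -> homogeneous (m + n) (ncmul f g).
Proof.
move=> hf hg w hw; rewrite /ncmul big1 // => k _.
have [km|km] := eqVneq (k : nat) m.
  by rewrite hg ?mulr0 // size_drop; apply: contra hw => /eqP <-; rewrite -km subnKC // -ltnS.
by rewrite hf ?mul0r // size_takel // -ltnS.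
Qed.

Lemma homogeneous_br m n f g :
  homogeneous m f -> homogeneous n g -> homogeneous (m + n) (br f g).
Proof.
move=> hf hg w hw; rewrite /br (homogeneous_ncmul hf hg) //.
by rewrite (homogeneous_ncmul hg hf) ?subr0 // addnC.
Qed.

Ltac expand_br := rewrite /br /ncmul !big_ord_recr !big_ord0 /= ?(mul0r, mulr0, add0r, addr0).

Lemma br_hv_hv u v x y : br (hv u) (hv v) [:: x; y] = lie2 u v x y.
Proof. by expand_br. Qed.

Lemma br_hv_l h f x y z :
  br (hv h) f [:: x; y; z] = h x * f [:: y; z] - f [:: x; y] * h z.
Proof. by expand_br; rewrite ?(subr0, sub0r). Qed.

Lemma br_hv_r f h x y z :
  br f (hv h) [:: x; y; z] = f [:: x; y] * h z - h x * f [:: y; z].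
Proof. by expand_br; rewrite ?(subr0, sub0r). Qed.

(* The coefficient of x y z in tilde-tau a (rbar (i, p)) when b = a^~ p; the first term of
   tau_val is rewritten as [[x_i, b_i], S_p] = - [S_p, [x_i, b_i]]. *)
Definition tau3 (b : line -> Hel) (i : line) (p : point) (x y z : 'I_7) : int :=
  \sum_(j : line | inc p j) lie3 (xcoef i) (xcoef j) (b j) x y z
  - lie3 (Scoef p) (xcoef i) (b i) x y z.

Lemma tau_valE a i p x y z : tau_val a i p [:: x; y; z] = tau3 (a^~ p) i p x y z.
Proof.
rewrite /tau_val /ncadd /tau3 br_hv_r br_hv_l !br_hv_hv addrC; congr (_ + _).
  rewrite /lie3 mulr_sumr mulr_suml -sumrB; apply: eq_bigr => j _.
  by rewrite !br_hv_hv.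
by rewrite /lie3 -opprB; congr (- _); ring.
Qed.

Lemma homogeneous_tau_val a i p : homogeneous 3 (tau_val a i p).
Proof.
have h2 u v : homogeneous 2 (br (hv u) (hv v)).
  by apply: (@homogeneous_br 1 1); apply: homogeneous_hv.
have hsum : homogeneous 2 (fun w => \sum_(j : line | inc p j) br (X j) (hv (a j p)) w).
  by move=> w hw; rewrite big1 // => j _; apply: h2.
move=> w hw; rewrite /tau_val /ncadd.
rewrite (@homogeneous_br 2 1 _ _ (h2 _ _) (homogeneous_hv _)) // add0r.
exact: (@homogeneous_br 1 2 _ _ (homogeneous_hv _) hsum).
Qed.

Definition gcoef (k : 'I_7) : Hel := fun j => (j == k)%:R.

Definition R3gen (k : 'I_7) (i : line) (p : point) : 'I_7 -> 'I_7 -> 'I_7 -> int :=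
  lie3 (gcoef k) (xcoef i) (Scoef p).

Lemma R3genE k i p x y z : br (gen k) (rbar i p) [:: x; y; z] = R3gen k i p x y z.
Proof. by rewrite br_hv_l /rbar !br_hv_hv. Qed.

Lemma homogeneous_R3gen k i p : homogeneous 3 (br (gen k) (rbar i p)).
Proof.
apply: (@homogeneous_br 1 2); first exact: homogeneous_hv.
by apply: (@homogeneous_br 1 1); apply: homogeneous_hv.
Qed.

Definition inR3c (f : 'I_7 -> 'I_7 -> 'I_7 -> int) : Prop :=
  exists c : 'I_7 -> line -> point -> int, forall x y z,
    f x y z = \sum_(k : 'I_7) \sum_(i : line) \sum_(p : point | inB i p)
                c k i p * R3gen k i p x y z.

Lemma inR3E v : homogeneous 3 v -> inR3 v <-> inR3c (fun x y z => v [:: x; y; z]).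
Proof.
move=> hom_v; split=> -[c hc]; exists c; [move=> x y z | move=> w].
  by rewrite hc; under eq_bigr do under eq_bigr do under eq_bigr do rewrite R3genE.
have [/eqP|hw] := eqVneq (size w) 3; last first.
  rewrite hom_v // big1 // => k _; rewrite big1 // => i _; rewrite big1 // => p _.
  by rewrite homogeneous_R3gen ?mulr0.
case: w => [|x [|y [|z [|? ?]]]] //= _.
by rewrite hc; under [RHS]eq_bigr do under eq_bigr do under eq_bigr do rewrite R3genE.
Qed.

Section R3Closure.
Implicit Types f g : 'I_7 -> 'I_7 -> 'I_7 -> int.

Lemma inR3c_ext f g : (forall x y z, f x y z = g x y z) -> inR3c f -> inR3c g.
Proof. by move=> efg [c hc]; exists c => x y z; rewrite -efg. Qed.

Lemma inR3c0 : inR3c (fun _ _ _ => 0).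
Proof.
exists (fun _ _ _ => 0) => x y z; rewrite big1 // => k _; rewrite big1 // => i _.
by rewrite big1 // => p _; rewrite mul0r.
Qed.

Lemma inR3cD f g : inR3c f -> inR3c g -> inR3c (fun x y z => f x y z + g x y z).
Proof.
move=> [c hc] [d hd]; exists (fun k i p => c k i p + d k i p) => x y z.
rewrite hc hd -big_split; apply: eq_bigr => k _; rewrite -big_split; apply: eq_bigr => i _.
by rewrite -big_split; apply: eq_bigr => p _; rewrite mulrDl.
Qed.

Lemma inR3cZ m f : inR3c f -> inR3c (fun x y z => m * f x y z).
Proof.
move=> [c hc]; exists (fun k i p => m * c k i p) => x y z.
rewrite hc mulr_sumr; apply: eq_bigr => k _; rewrite mulr_sumr; apply: eq_bigr => i _.
by rewrite mulr_sumr; apply: eq_bigr => p _; rewrite mulrA.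
Qed.

Lemma inR3c_sum (I : Type) (r : seq I) (P : pred I) (F : I -> 'I_7 -> 'I_7 -> 'I_7 -> int) :
  (forall t, P t -> inR3c (F t)) -> inR3c (fun x y z => \sum_(t <- r | P t) F t x y z).
Proof.
move=> hF; elim: r => [|t r IH]; first by apply: inR3c_ext inR3c0 => x y z; rewrite big_nil.
have [Pt|nPt] := boolP (P t).
  by apply: inR3c_ext (inR3cD (hF t Pt) IH) => x y z; rewrite big_cons Pt.
by apply: inR3c_ext IH => x y z; rewrite big_cons (negPf nPt).
Qed.

End R3Closure.

Lemma inR3c_R3gen_B k i p : inB i p -> inR3c (R3gen k i p).
Proof.
move=> hB; exists (fun k' i' p' => ((k' == k) && (i' == i) && (p' == p))%:R) => x y z.
rewrite (bigD1 k) //= [X in _ + X]big1 ?addr0 => [|k' /negPf nk]; last first.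
  by rewrite big1 // => i' _; rewrite big1 // => p' _; rewrite nk mul0r.
rewrite (bigD1 i) //= [X in _ + X]big1 ?addr0 => [|i' /negPf ni]; last first.
  by rewrite big1 // => p' _; rewrite ni andbF mul0r.
rewrite (bigD1 p) //= [X in _ + X]big1 ?addr0 => [|p' /andP[_ /negPf np]]; last first.
  by rewrite np andbF mul0r.
by rewrite !eqxx mul1r.
Qed.

Lemma inA_inc p l : inP0 p -> inc p l -> inA l p.
Proof.
move=> hp hl; rewrite /inA hp hl !andbT; apply/eqP => l0.
by move: hp; rewrite /inP0 (_ : ord0 = l) ?hl //; apply: val_inj.
Qed.

Lemma sum_xcoef p k : \sum_(l : line | inc p l) xcoef l k = Scoef p k.
Proof.
rewrite big_mkcond (bigD1 (lift ord0 k)) //= big1 ?addr0 => [|l nl]; last first.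
  by rewrite /xcoef eq_sym (negPf nl); case: ifP.
by rewrite /xcoef /Scoef eqxx; case: ifP.
Qed.

Lemma sum_lie3_xcoef2 h v p x y z :
  \sum_(l : line | inc p l) lie3 h (xcoef l) v x y z = lie3 h (Scoef p) v x y z.
Proof. by rewrite -lie3_sum2; apply: eq_lie3 => // k; rewrite sum_xcoef. Qed.

Lemma sum_lie3_xcoef1 u v p x y z :
  \sum_(l : line | inc p l) lie3 (xcoef l) u v x y z = lie3 (Scoef p) u v x y z.
Proof. by rewrite -lie3_sum1; apply: eq_lie3 => // k; rewrite sum_xcoef. Qed.

(* B omits exactly the minimal line through each point of P_0. *)
Lemma inR3c_minline p (F : line -> 'I_7 -> 'I_7 -> 'I_7 -> int) :
  (forall x y z, \sum_(l : line | inc p l) F l x y z = 0) ->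
  (forall l, inB l p -> inR3c (F l)) -> forall i, inA i p -> inR3c (F i).
Proof.
move=> F0 FB i hA; have [im|im] := eqVneq (nat_of_ord i) (minline p); last first.
  by apply: FB; rewrite /inB hA im.
have [_ hp hi] := and3P hA.
apply: (inR3c_ext _ (inR3cZ (-1) (@inR3c_sum _ (index_enum line)
          (fun l => inc p l && (l != i)) F _))) => [x y z|l /andP[hl nli]].
  by move/eqP: (F0 x y z); rewrite (bigD1 i) //= addr_eq0 mulN1r => /eqP ->.
apply: FB; rewrite /inB inA_inc //= -im.
by apply: contra nli => /eqP eli; apply/eqP/val_inj.
Qed.

Lemma inR3c_R3gen k i p : inA i p -> inR3c (R3gen k i p).
Proof.
apply: (@inR3c_minline p (fun l => R3gen k l p)) => [x y z|l]; last exact: inR3c_R3gen_B.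
by rewrite sum_lie3_xcoef2 lie3_same.
Qed.

Lemma inR3c_lie3 h i p : inA i p -> inR3c (lie3 h (xcoef i) (Scoef p)).
Proof.
move=> hA; apply: (inR3c_ext _ (@inR3c_sum _ (index_enum 'I_7) xpredT
  (fun k x y z => h k * R3gen k i p x y z) (fun k _ => inR3cZ _ (inR3c_R3gen k hA)))) => x y z.
rewrite /R3gen; under eq_bigr do rewrite -lie3Z1; rewrite -lie3_sum1.
apply: eq_lie3 => // x'; rewrite (bigD1 x') //= big1 ?addr0 => [|k nk]; last first.
  by rewrite /gcoef eq_sym (negPf nk) mulr0.
by rewrite /gcoef eqxx mulr1.
Qed.

(** * Linear forms *)

Section LinearForms.
Variables (I J : finType) (R : comPzRingType).
Implicit Types (b : I -> J -> R) (Phi Psi : (I -> J -> R) -> R).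

Definition ldelta (i0 : I) (j0 : J) : I -> J -> R := fun i j => ((i == i0) && (j == j0))%:R.

Definition linear_form Phi : Prop :=
  [/\ forall b b', (forall i j, b i j = b' i j) -> Phi b = Phi b',
      forall c b, Phi (fun i j => c * b i j) = c * Phi b
    & forall (T : Type) (r : seq T) (P : pred T) (F : T -> I -> J -> R),
        Phi (fun i j => \sum_(t <- r | P t) F t i j) = \sum_(t <- r | P t) Phi (F t)].

Lemma linear_form_ext Phi Psi : (forall b, Phi b = Psi b) -> linear_form Phi -> linear_form Psi.
Proof.
move=> ePhi [e s S]; split=> [b b' ebb'|c b|T r P F]; rewrite -?ePhi; first exact: e.
  by rewrite s.
by rewrite S; apply: eq_bigr => t _; rewrite ePhi.
Qed.

Lemma linear_form_coord i j : linear_form (fun b => b i j).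
Proof. by split. Qed.

Lemma linear_formD Phi Psi :
  linear_form Phi -> linear_form Psi -> linear_form (fun b => Phi b + Psi b).
Proof.
move=> [e1 s1 S1] [e2 s2 S2]; split=> [b b' ebb'|c b|T r P F].
- by rewrite (e1 _ _ ebb') (e2 _ _ ebb').
- by rewrite s1 s2 mulrDr.
- by rewrite S1 S2 -big_split.
Qed.

Lemma linear_formN Phi : linear_form Phi -> linear_form (fun b => - Phi b).
Proof.
move=> [e1 s1 S1]; split=> [b b' ebb'|c b|T r P F].
- by rewrite (e1 _ _ ebb').
- by rewrite s1 mulrN.
- by rewrite S1 sumrN.
Qed.

Lemma linear_formMl c Phi : linear_form Phi -> linear_form (fun b => c * Phi b).
Proof.
move=> [e1 s1 S1]; split=> [b b' ebb'|c' b|T r P F].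
- by rewrite (e1 _ _ ebb').
- by rewrite s1 mulrCA.
- by rewrite S1 mulr_sumr.
Qed.

Lemma linear_formMr c Phi : linear_form Phi -> linear_form (fun b => Phi b * c).
Proof. by move=> /(linear_formMl c); apply: linear_form_ext => b; rewrite mulrC. Qed.

Lemma linear_form_sum (T : Type) (r : seq T) (P : pred T) (Phi : T -> (I -> J -> R) -> R) :
  (forall t, P t -> linear_form (Phi t)) ->
  linear_form (fun b => \sum_(t <- r | P t) Phi t b).
Proof.
move=> hPhi; split=> [b b' ebb'|c b|T' r' P' F].
- by apply: eq_bigr => t /hPhi[e _ _]; apply: e.
- by rewrite mulr_sumr; apply: eq_bigr => t /hPhi[_ s _]; apply: s.
- rewrite exchange_big; apply: eq_bigr => t /hPhi[_ _ S]; exact: S.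
Qed.

Lemma linear_formDr Phi b b' : linear_form Phi ->
  Phi (fun i j => b i j + b' i j) = Phi b + Phi b'.
Proof.
case=> e _ S; have := S _ [:: b; b'] xpredT id; rewrite !big_cons big_nil !addr0 => <-.
by apply: e => i j; rewrite !big_cons big_nil addr0.
Qed.

Lemma linear_form_expand Phi b : linear_form Phi ->
  Phi b = \sum_(i : I) \sum_(j : J) b i j * Phi (ldelta i j).
Proof.
case=> e s S.
have eb i j : b i j = \sum_(i' : I) \sum_(j' : J) b i' j' * ldelta i' j' i j.
  rewrite (bigD1 i) //= [X in _ + X]big1 ?addr0 => [|i' ni]; last first.
    by rewrite big1 // => j' _; rewrite /ldelta (eq_sym i) (negPf ni) mulr0.
  rewrite (bigD1 j) //= [X in _ + X]big1 ?addr0 => [|j' nj]; last first.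
    by rewrite /ldelta (eq_sym j) (negPf nj) andbF mulr0.
  by rewrite /ldelta !eqxx mulr1.
rewrite (e _ _ eb) S; apply: eq_bigr => i' _.
by rewrite S; apply: eq_bigr => j' _; rewrite s.
Qed.

End LinearForms.

Arguments ldelta {I J R} i0 j0.
Arguments linear_form_coord {I J R} i j.

Lemma linear_form_lie3 h u j x y z : linear_form (fun b : line -> Hel => lie3 h u (b j) x y z).
Proof.
have lin_coord k c : linear_form (fun b : line -> Hel => b j k * c).
  by apply: linear_form_ext (linear_formMl c (linear_form_coord j k)) => b; rewrite mulrC.
apply: linear_form_ext (linear_formD (linear_formD (lin_coord _ _) (linear_formN (lin_coord _ _)))
  (lin_coord _ _)) => b.
by rewrite lie3E.
Qed.

Lemma linear_form_tau3 i p x y z : linear_form (fun b => tau3 b i p x y z).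
Proof.
apply: linear_form_ext (linear_formD
  (linear_form_sum (index_enum line) (P := inc p)
     (fun j _ => linear_form_lie3 (xcoef i) (xcoef j) j x y z))
  (linear_formN (linear_form_lie3 (Scoef p) (xcoef i) i x y z))) => b.
by [].
Qed.

Section TauR3.
Variables (i : line) (p : point).
Implicit Types b : line -> Hel.

Lemma eq_tau3 b b' : (forall j k, b j k = b' j k) ->
  forall x y z, tau3 b i p x y z = tau3 b' i p x y z.
Proof. by move=> ebb' x y z; case: (linear_form_tau3 i p x y z) => e _ _; apply: e. Qed.

Lemma tau3Z c b x y z : tau3 (fun j k => c * b j k) i p x y z = c * tau3 b i p x y z.
Proof. by case: (linear_form_tau3 i p x y z) => _ s _; apply: s. Qed.

Lemma inR3c_tau3D b b' : inR3c (tau3 b i p) -> inR3c (tau3 b' i p) ->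
  inR3c (tau3 (fun j k => b j k + b' j k) i p).
Proof.
move=> hb hb'; apply: inR3c_ext (inR3cD hb hb') => x y z.
by rewrite (linear_formDr _ _ (linear_form_tau3 i p x y z)).
Qed.

Lemma inR3c_tau3Z c b : inR3c (tau3 b i p) -> inR3c (tau3 (fun j k => c * b j k) i p).
Proof. by move=> hb; apply: inR3c_ext (inR3cZ c hb) => x y z; rewrite tau3Z. Qed.

Lemma inR3c_tau3_sum (T : Type) (r : seq T) (P : pred T) (F : T -> line -> Hel) :
  (forall t, P t -> inR3c (tau3 (F t) i p)) ->
  inR3c (tau3 (fun j k => \sum_(t <- r | P t) F t j k) i p).
Proof.
move=> hF; apply: inR3c_ext (@inR3c_sum _ r P (fun t => tau3 (F t) i p) hF) => x y z.
by case: (linear_form_tau3 i p x y z) => _ _ S; rewrite S.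
Qed.

End TauR3.

(** * U is contained in the kernel *)

Lemma inR3_tau_val a i p : inR3 (tau_val a i p) <-> inR3c (tau3 (a^~ p) i p).
Proof.
have [to_c of_c] := inR3E (homogeneous_tau_val a i p).
split=> h; [move/to_c: h | apply: of_c; move: h]; apply: inR3c_ext => x y z; by rewrite tau_valE.
Qed.

Section TauGenerators.
Variables (i : line) (p : point) (x y z : 'I_7).

Lemma tau3_single (l : line) (u : Hel) :
  tau3 (fun j k => (j == l)%:R * u k) i p x y z
  = (inc p l)%:R * lie3 (xcoef i) (xcoef l) u x y z
    - (i == l)%:R * lie3 (Scoef p) (xcoef i) u x y z.
Proof.
rewrite /tau3 lie3Z3; congr (_ - _); under eq_bigr do rewrite lie3Z3.
rewrite big_mkcond (bigD1 l) //= [X in _ + X]big1 ?addr0 => [|j nj]; last first.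
  by rewrite (negPf nj) mul0r; case: ifP.
by rewrite eqxx mul1r; case: ifP; rewrite ?mul1r ?mul0r.
Qed.

(* The Jacobi identity [x_i, [S_p, u]] - [S_p, [x_i, u]] = - [u, [x_i, S_p]]. *)
Lemma tau3_const (u : Hel) : tau3 (fun _ => u) i p x y z = - lie3 u (xcoef i) (Scoef p) x y z.
Proof. by rewrite /tau3 sum_lie3_xcoef2 /lie3 /lie2; ring. Qed.

End TauGenerators.

Section TauGeneratorsR3.
Variables (i : line) (p : point).

Lemma inR3c_tau3_a0 l p' : inR3c (tau3 (fun j k => a0 l p' j p k) i p).
Proof.
apply: inR3c_ext inR3c0 => x y z.
rewrite (@eq_tau3 i p _ (fun j k => (p == p')%:R * ((j == l)%:R * xcoef l k))); last first.
  by move=> j k; rewrite /a0 -mulnb natrM -mulrA mulrCA.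
rewrite tau3Z tau3_single lie3_same mulr0 sub0r.
by have [->|_] := eqVneq i l; rewrite ?lie3_same ?(mulr0, mul0r, oppr0).
Qed.

Lemma inR3c_tau3_a1 l p' : inA i p -> inR3c (tau3 (fun j k => a1 l p' j p k) i p).
Proof.
move=> hA; apply: inR3c_ext (inR3cZ ((p == p')%:R * -1) (inR3c_lie3 (xcoef l) hA)) => x y z.
rewrite /a1 (@tau3Z i p _ (fun _ => xcoef l)) tau3_const.
by rewrite -mulrA mulN1r.
Qed.

Lemma inR3c_tau3_a2 l p1 p2 : inA l p2 -> inR3c (tau3 (fun j k => a2 l p1 p2 j p k) i p).
Proof.
move=> hA; apply: (inR3c_ext _ (inR3cZ (p == p1)%:R (inR3cD
  (inR3cZ (inc p l)%:R (inR3c_lie3 (xcoef i) hA))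
  (inR3cZ (- (i == l)%:R) (inR3c_lie3 (Scoef p) hA))))) => x y z.
rewrite (@eq_tau3 i p _ (fun j k => (p == p1)%:R * ((j == l)%:R * Scoef p2 k))); last first.
  by move=> j k; rewrite /a2 -mulnb natrM -mulrA mulrCA.
rewrite tau3Z tau3_single mulNr.
by have [->|] := eqVneq i l; rewrite ?mul0r.
Qed.

End TauGeneratorsR3.

Lemma eq_tau3_local b b' i p x y z :
  inc p i -> (forall j, inc p j -> forall k, b j k = b' j k) ->
  tau3 b i p x y z = tau3 b' i p x y z.
Proof.
move=> hi ebb'; rewrite /tau3; congr (_ - _).
  by apply: eq_bigr => j hj; apply: eq_lie3 => // k; apply: ebb'.
by apply: eq_lie3 => // k; apply: ebb'.
Qed.

Lemma inU_ker_tau a : inU a -> in_ker_tau a.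
Proof.
move=> [c0 [c1 [c2 hc]]] i p hB.
have hA : inA i p by case/andP: hB.
have [_ hp hi] := and3P hA.
apply/inR3_tau_val; apply: inR3c_ext => [x y z|].
  by apply: esym; apply: eq_tau3_local hi _ => j hj k; apply/hc/inA_inc.
apply: inR3c_tau3D; first apply: inR3c_tau3D.
- apply: inR3c_tau3_sum => l _; apply: inR3c_tau3_sum => p' _.
  by apply: inR3c_tau3Z; apply: inR3c_tau3_a0.
- apply: inR3c_tau3_sum => l _; apply: inR3c_tau3_sum => p' _.
  by apply: inR3c_tau3Z; apply: inR3c_tau3_a1.
- apply: inR3c_tau3_sum => l _; apply: inR3c_tau3_sum => p1 _.
  apply: inR3c_tau3_sum => p2 /andP[hp2 hl]; apply: inR3c_tau3Z; apply: inR3c_tau3_a2.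
  exact: inA_inc.
Qed.

(** * The kernel is contained in U *)

Lemma sum_tau3 b p x y z : \sum_(i : line | inc p i) tau3 b i p x y z = 0.
Proof.
rewrite sumrB exchange_big /=.
by under eq_bigr do rewrite sum_lie3_xcoef1; rewrite subrr.
Qed.

Lemma ker_tau_inA a : in_ker_tau a -> forall i p, inA i p -> inR3c (tau3 (a^~ p) i p).
Proof.
move=> hker i p; apply: (@inR3c_minline p (fun l => tau3 (a^~ p) l p)) => [x y z|l hB].
  exact: sum_tau3.
exact/inR3_tau_val/hker.
Qed.

(* Unlike enum 'I_n.+1, which is blocked by the opaque idP inside insub, this enumeration
   reduces under vm_compute. *)
Definition ords (n : nat) : seq 'I_n.+1 := [seq inZp i | i <- iota 0 n.+1].

Lemma index_enum_ords n : index_enum 'I_n.+1 = ords n.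
Proof.
apply: (inj_map val_inj); rewrite [index_enum _]unlock -enumT val_enum_ord -map_comp.
rewrite -[LHS]map_id; apply/eq_in_map => m; rewrite mem_iota => /= hm.
by rewrite modn_small.
Qed.

Lemma all_ords n (P : pred 'I_n.+1) : all P (ords n) -> forall i, P i.
Proof. by move=> /allP hP i; apply: hP; rewrite -index_enum_ords mem_index_enum. Qed.

(* An entry (x, y, z, c) of a wform stands for c times the coefficient of the word x y z, an
   entry (j, k, c) of an lform for c * b j k. *)
Definition wform := seq (nat * nat * nat * int).

Definition wsum (phi : wform) (f : 'I_7 -> 'I_7 -> 'I_7 -> int) : int :=
  \sum_(e <- phi) let: (x, y, z, c) := e in c * f (inZp x) (inZp y) (inZp z).

Lemma eq_wsum phi f g : (forall x y z, f x y z = g x y z) -> wsum phi f = wsum phi g.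
Proof. by move=> efg; apply: eq_bigr => -[[[x y] z] c] _; rewrite efg. Qed.

Lemma wsumZ phi c f : wsum phi (fun x y z => c * f x y z) = c * wsum phi f.
Proof. by rewrite /wsum mulr_sumr; apply: eq_bigr => -[[[x y] z] d] _; rewrite mulrCA. Qed.

Lemma wsum_sum phi (T : Type) (r : seq T) (P : pred T) F :
  wsum phi (fun x y z => \sum_(t <- r | P t) F t x y z) = \sum_(t <- r | P t) wsum phi (F t).
Proof.
by rewrite /wsum exchange_big; apply: eq_bigr => -[[[x y] z] c] _; rewrite mulr_sumr.
Qed.

Lemma wsum_R3 phi f : (forall k i p, inA i p -> wsum phi (R3gen k i p) = 0) ->
  inR3c f -> wsum phi f = 0.
Proof.
move=> phi0 [c hc]; rewrite (eq_wsum _ hc) wsum_sum big1 // => k _.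
rewrite wsum_sum big1 // => i _; rewrite wsum_sum big1 // => p /andP[hA _].
by rewrite wsumZ phi0 ?mulr0.
Qed.

Definition lform := seq (nat * nat * int).

Definition lsum (L : lform) (b : line -> Hel) : int :=
  \sum_(e <- L) let: (j, k, c) := e in c * b (inZp j) (inZp k).

Lemma linear_form_lsum L : linear_form (lsum L).
Proof.
apply: linear_form_sum => -[[j k] c] _.
exact/linear_formMl/linear_form_coord.
Qed.

Lemma linear_form_wsum_tau3 phi i p : linear_form (fun b => wsum phi (tau3 b i p)).
Proof.
apply: linear_form_sum => -[[[x y] z] c] _.
exact/linear_formMl/linear_form_tau3.
Qed.

Definition lookup (K : eqType) (T : Type) (s : seq (K * seq T)) (key : K) : seq T :=
  flatten [seq e.2 | e <- s & e.1 == key].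

(* A certificate for a point q: for every line l_j through q and every k, a local kernel
   element b satisfies b j k = cert_rhs b j k + sum of c * test_form t b over the entries
   (t, c) of the multipliers at (j, k), the generators a^(0), a^(1), a^(2) of U entering
   cert_rhs with the coefficients given by the linear forms a0_coefs, a1_coefs, a2_coefs.
   Each test is a line through q with a functional vanishing on R_3, so test_form t b = 0. *)
Record local_cert := LocalCert {
  tests : seq (nat * wform);
  a0_coefs : seq (nat * lform);
  a1_coefs : seq (nat * lform);
  a2_coefs : seq (nat * nat * lform);
  multipliers : seq (nat * nat * seq (nat * int))
}.

Definition R3_annihilator (phi : wform) : bool :=
  all (fun k => all (fun i => all (fun p => if inA i p then wsum phi (R3gen k i p) == 0 else true)
    (ords 11)) (ords 7)) (ords 6).

Lemma R3_annihilatorP phi f : R3_annihilator phi -> inR3c f -> wsum phi f = 0.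
Proof.
move=> /all_ords hphi; apply: wsum_R3 => k i p hA.
by have /all_ords/(_ i)/all_ords/(_ p) := hphi k; rewrite hA => /eqP.
Qed.

(* ldelta with concrete instances, which the VM evaluates several times faster. *)
Definition local_delta (j0 : line) (k0 : 'I_7) : line -> Hel :=
  fun j k => ((j == j0) && (k == k0))%:R.

Section LocalCertificate.
Variables (q : point) (C : local_cert).

Definition test_form (t : nat) (b : line -> Hel) : int :=
  let: (i, phi) := nth (0%N, [::]) (tests C) t in wsum phi (tau3 b (inZp i) q).

Definition cert_rhs (b : line -> Hel) (j : line) (k : 'I_7) : int :=
  lsum (lookup (a0_coefs C) j) b * xcoef j k
  + \sum_(i : line | nat_of_ord i != 0%N) lsum (lookup (a1_coefs C) i) b * xcoef i k
  + \sum_(p : point | inP0 p && inc p j)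
      lsum (lookup (a2_coefs C) (nat_of_ord j, nat_of_ord p)) b * Scoef p k.

Definition cert_defect (j : line) (k : 'I_7) (b : line -> Hel) : int :=
  b j k - cert_rhs b j k
  - \sum_(e <- lookup (multipliers C) (nat_of_ord j, nat_of_ord k)) e.2 * test_form e.1 b.

(* [if] rather than [==>], since the VM evaluates both arguments of implb. *)
Definition cert_ok : bool :=
  all (fun t => inA (inZp t.1) q && R3_annihilator t.2) (tests C)
  && all (fun j => if inA j q then all (fun k => all (fun j' => if inc q j' then all (fun k' =>
       cert_defect j k (local_delta j' k') == 0) (ords 6) else true) (ords 7)) (ords 6) else true)
       (ords 7).

Lemma linear_form_cert_defect j k : linear_form (cert_defect j k).
Proof.
have lin_test t : linear_form (test_form t).
  by rewrite /test_form; case: nth => i phi; apply: linear_form_wsum_tau3.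
apply: linear_formD; first apply: linear_formD; first exact: linear_form_coord.
  apply/linear_formN/linear_formD; first apply: linear_formD.
  - exact/linear_formMr/linear_form_lsum.
  - by apply: linear_form_sum => i _; apply/linear_formMr/linear_form_lsum.
  - by apply: linear_form_sum => p _; apply/linear_formMr/linear_form_lsum.
by apply/linear_formN/linear_form_sum => e _; apply/linear_formMl/lin_test.
Qed.

Lemma cert_okP b : cert_ok -> (forall j k, ~~ inc q j -> b j k = 0) ->
  (forall i, inA i q -> inR3c (tau3 b i q)) ->
  forall j k, inA j q -> b j k = cert_rhs b j k.
Proof.
case/andP=> /allP htests /all_ords hdefect hsupp hker j k hj.
have test0 t : test_form t b = 0.
  rewrite /test_form; have [ht|ht] := ltnP t (size (tests C)); last first.
    by rewrite nth_default // /wsum big_nil.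
  have /htests := mem_nth (0%N, [::]) ht; case: nth => i phi /andP[hi hphi].
  exact: R3_annihilatorP hphi (hker _ hi).
have := linear_form_expand b (linear_form_cert_defect j k).
rewrite big1 => [|j' _]; last first.
  have [hj'|hj'] := boolP (inc q j'); last by rewrite big1 // => k' _; rewrite hsupp ?mul0r.
  rewrite big1 // => k' _; have := hdefect j; rewrite hj => /all_ords/(_ k)/all_ords/(_ j').
  by rewrite hj' => /all_ords/(_ k')/eqP ->; rewrite mulr0.
rewrite /cert_defect big1 ?subr0 => [/eqP|e _]; last by rewrite test0 mulr0.
by rewrite subr_eq0 => /eqP.
Qed.

End LocalCertificate.

(* Certificates for the points 4, ..., 11 of P_0, found by exact integer elimination. *)
Definition ann0 : wform :=
  [:: (0, 0, 2, (-1)%Z); (0, 0, 4, 1%Z); (0, 2, 2, (-1)%Z); (0, 4, 2, 1%Z); (2, 2, 4, 1%Z)].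

Definition ann1 : wform :=
  [:: (0, 1, 4, (-1)%Z); (0, 1, 6, 1%Z); (0, 2, 6, 1%Z); (0, 3, 2, (-1)%Z); (0, 4, 6, (-1)%Z);
      (0, 6, 2, 1%Z); (2, 3, 6, 1%Z); (2, 4, 6, 1%Z); (2, 5, 4, (-1)%Z); (2, 6, 4, 1%Z);
      (4, 5, 6, 1%Z)].

Definition ann2 : wform :=
  [:: (0, 0, 3, 1%Z); (0, 0, 6, (-1)%Z); (0, 3, 6, 1%Z); (0, 6, 6, (-1)%Z); (3, 6, 6, 1%Z)].

Definition ann3 : wform :=
  [:: (0, 1, 3, 1%Z); (0, 1, 5, (-1)%Z); (0, 2, 5, 1%Z); (0, 3, 2, (-1)%Z); (0, 3, 5, 1%Z);
      (0, 4, 5, (-1)%Z); (0, 6, 2, 1%Z); (0, 6, 5, (-1)%Z); (2, 3, 5, 1%Z); (2, 4, 5, 1%Z);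
      (2, 5, 3, 1%Z); (2, 6, 3, (-1)%Z); (3, 6, 5, 1%Z)].

Definition ann4 : wform :=
  [:: (0, 1, 2, (-1)%Z); (0, 1, 6, 1%Z); (0, 2, 1, (-1)%Z); (0, 2, 6, 1%Z); (0, 3, 2, (-1)%Z);
      (0, 4, 1, 1%Z); (0, 4, 6, (-1)%Z); (0, 6, 2, 1%Z); (1, 3, 2, 1%Z); (1, 4, 2, (-1)%Z);
      (1, 4, 5, 1%Z); (1, 5, 2, (-1)%Z); (1, 6, 2, 1%Z); (1, 6, 5, (-1)%Z); (2, 3, 5, (-1)%Z);
      (2, 3, 6, 1%Z); (2, 4, 6, 1%Z); (4, 5, 6, 1%Z); (4, 6, 5, 1%Z)].

Definition ann5 : wform :=
  [:: (1, 1, 3, 1%Z); (1, 1, 5, (-1)%Z); (1, 3, 5, 1%Z); (1, 5, 5, (-1)%Z); (3, 5, 5, 1%Z)].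

Definition ann6 : wform :=
  [:: (0, 1, 3, (-1)%Z); (0, 1, 6, 1%Z); (0, 3, 1, (-1)%Z); (0, 6, 1, 1%Z); (1, 3, 6, 1%Z);
      (1, 4, 5, 1%Z); (1, 5, 6, (-1)%Z); (1, 6, 5, (-1)%Z); (2, 3, 5, (-1)%Z); (2, 3, 6, 1%Z);
      (2, 5, 3, (-1)%Z); (2, 6, 3, 1%Z); (3, 5, 6, 1%Z); (4, 5, 6, 1%Z); (4, 6, 5, 1%Z)].

Definition ann7 : wform :=
  [:: (1, 1, 4, 1%Z); (1, 1, 6, (-1)%Z); (1, 4, 4, 1%Z); (1, 6, 4, (-1)%Z); (4, 4, 6, (-1)%Z)].

Definition ann8 : wform :=
  [:: (2, 2, 5, (-1)%Z); (2, 2, 6, 1%Z); (2, 5, 5, (-1)%Z); (2, 6, 5, 1%Z); (5, 5, 6, 1%Z)].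

Definition ann9 : wform :=
  [:: (0, 1, 3, (-1)%Z); (0, 1, 4, 1%Z); (0, 2, 3, (-1)%Z); (0, 3, 1, (-1)%Z); (0, 3, 4, 1%Z);
      (0, 4, 3, 1%Z); (0, 6, 1, 1%Z); (0, 6, 4, (-1)%Z); (1, 3, 4, 1%Z); (1, 4, 3, 1%Z);
      (1, 5, 4, (-1)%Z); (1, 6, 3, (-1)%Z); (2, 3, 4, (-1)%Z); (2, 4, 3, (-1)%Z); (3, 5, 4, 1%Z);
      (3, 6, 4, 1%Z)].

Definition cert_p135 : local_cert :=
  {| tests := [:: (3, ann0); (3, ann1); (5, ann1)];
     a0_coefs := [:: (1, [:: (1, 0, 1%Z); (1, 3, (-1)%Z); (1, 4, (-1)%Z); (1, 5, (-1)%Z);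
                             (3, 0, (-1)%Z); (3, 3, 1%Z); (3, 4, 1%Z); (5, 5, 1%Z)]);
                     (3, [:: (1, 2, (-1)%Z); (1, 3, (-2)%Z); (1, 4, 1%Z); (1, 6, 2%Z);
                             (3, 1, (-1)%Z); (3, 2, 1%Z); (3, 3, 2%Z); (3, 4, (-1)%Z);
                             (3, 6, (-1)%Z); (5, 1, 1%Z); (5, 6, (-1)%Z)]);
                     (5, [:: (1, 3, (-1)%Z); (1, 6, 1%Z); (3, 0, 1%Z); (3, 3, 2%Z);
                             (3, 4, (-1)%Z); (5, 0, (-1)%Z); (5, 3, (-1)%Z); (5, 4, 1%Z);
                             (5, 6, (-1)%Z)])];
     a1_coefs := [:: (1, [:: (5, 0, 1%Z)]);
                     (2, [:: (1, 3, (-1)%Z); (1, 6, 1%Z); (3, 3, 1%Z); (5, 1, 1%Z);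
                             (5, 6, (-1)%Z)]);
                     (3, [:: (1, 2, 1%Z); (1, 4, (-1)%Z); (3, 0, (-1)%Z); (3, 4, 1%Z);
                             (5, 0, 1%Z)]);
                     (4, [:: (3, 3, 1%Z)]);
                     (5, [:: (3, 0, (-1)%Z); (3, 4, 1%Z); (5, 0, 1%Z)]);
                     (6, [:: (5, 5, 1%Z)]);
                     (7, [:: (1, 3, (-1)%Z); (1, 6, 1%Z); (3, 3, 1%Z)])];
     a2_coefs := [:: (1, 4, [:: (1, 4, 1%Z); (3, 0, 1%Z); (3, 4, (-1)%Z); (5, 0, (-1)%Z)]);
                     (1, 5, [:: (1, 3, 1%Z); (3, 3, (-1)%Z)]);
                     (1, 6, [:: (1, 5, 1%Z); (5, 5, (-1)%Z)]);
                     (3, 4, [:: (3, 0, 1%Z); (5, 0, (-1)%Z)]);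
                     (3, 7, [:: (1, 3, 1%Z); (1, 6, (-1)%Z); (3, 1, 1%Z); (3, 3, (-1)%Z);
                                (5, 1, (-1)%Z); (5, 6, 1%Z)]);
                     (3, 10, [:: (1, 3, 1%Z); (1, 6, (-1)%Z); (3, 3, (-1)%Z); (3, 6, 1%Z)]);
                     (5, 9, [:: (1, 3, 1%Z); (1, 6, (-1)%Z); (3, 3, (-1)%Z); (5, 6, 1%Z)]);
                     (5, 11, [:: (3, 3, (-1)%Z); (5, 3, 1%Z)])];
     multipliers := [:: (1, 1, [:: (1, 1%Z); (2, 1%Z)]);
                     (3, 5, [:: (1, (-1)%Z)]);
                     (5, 2, [:: (0, (-1)%Z)])] |}.

Definition cert_p147 : local_cert :=
  {| tests := [:: (7, ann2); (7, ann1); (4, ann3)];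
     a0_coefs := [:: (1, [:: (1, 0, 1%Z); (1, 2, (-1)%Z); (1, 3, (-1)%Z); (1, 5, (-1)%Z);
                             (4, 2, 2%Z); (7, 0, (-1)%Z); (7, 2, (-1)%Z); (7, 3, 1%Z);
                             (7, 5, 1%Z)]);
                     (4, [:: (1, 2, (-2)%Z); (1, 4, 2%Z); (4, 0, (-1)%Z); (4, 1, (-1)%Z);
                             (4, 2, 2%Z); (4, 3, 1%Z); (4, 4, (-1)%Z); (7, 0, 1%Z); (7, 1, 1%Z);
                             (7, 3, (-1)%Z); (7, 4, (-1)%Z)]);
                     (7, [:: (1, 2, (-1)%Z); (1, 3, 1%Z); (1, 4, 1%Z); (1, 6, (-1)%Z);
                             (4, 2, 2%Z); (7, 2, (-1)%Z); (7, 3, (-1)%Z); (7, 4, (-1)%Z);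
                             (7, 6, 1%Z)])];
     a1_coefs := [:: (1, [:: (7, 0, 1%Z)]);
                     (2, [:: (1, 2, (-1)%Z); (1, 4, 1%Z); (4, 2, 1%Z); (7, 1, 1%Z);
                             (7, 4, (-1)%Z)]);
                     (3, [:: (4, 2, 1%Z)]);
                     (4, [:: (7, 3, 1%Z)]);
                     (5, [:: (1, 2, (-1)%Z); (1, 4, 1%Z); (4, 2, 1%Z)]);
                     (6, [:: (4, 2, 1%Z); (7, 2, (-1)%Z); (7, 5, 1%Z)]);
                     (7, [:: (1, 3, (-1)%Z); (1, 6, 1%Z); (7, 3, 1%Z)])];
     a2_coefs := [:: (1, 4, [:: (1, 2, 1%Z); (4, 2, (-1)%Z)]);
                     (1, 5, [:: (1, 3, 1%Z); (7, 3, (-1)%Z)]);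
                     (1, 6, [:: (1, 5, 1%Z); (4, 2, (-1)%Z); (7, 2, 1%Z); (7, 5, (-1)%Z)]);
                     (4, 5, [:: (4, 0, 1%Z); (7, 0, (-1)%Z)]);
                     (4, 8, [:: (1, 2, 1%Z); (1, 4, (-1)%Z); (4, 1, 1%Z); (4, 2, (-1)%Z);
                                (7, 1, (-1)%Z); (7, 4, 1%Z)]);
                     (4, 11, [:: (1, 2, 1%Z); (1, 4, (-1)%Z); (4, 2, (-1)%Z); (4, 4, 1%Z)]);
                     (7, 9, [:: (1, 2, 1%Z); (1, 4, (-1)%Z); (4, 2, (-1)%Z); (7, 4, 1%Z)]);
                     (7, 10, [:: (4, 2, (-1)%Z); (7, 2, 1%Z)])];
     multipliers := [:: (1, 1, [:: (1, (-1)%Z)]);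
                     (4, 5, [:: (1, 1%Z); (2, (-1)%Z)]);
                     (4, 6, [:: (0, (-1)%Z)])] |}.

Definition cert_p16 : local_cert :=
  {| tests := [:: (6, ann3)];
     a0_coefs := [:: (1, [:: (1, 0, 1%Z); (1, 1, 1%Z); (1, 3, (-1)%Z); (1, 4, (-1)%Z);
                             (6, 0, (-1)%Z); (6, 1, (-1)%Z); (6, 3, 1%Z); (6, 4, 1%Z)]);
                     (6, [:: (1, 1, 1%Z); (1, 2, 1%Z); (1, 4, (-1)%Z); (1, 5, (-1)%Z);
                             (6, 1, (-1)%Z); (6, 2, (-1)%Z); (6, 4, 1%Z); (6, 5, 1%Z)])];
     a1_coefs := [:: (1, [:: (6, 0, 1%Z)]);
                     (2, [:: (1, 1, 1%Z)]);
                     (3, [:: (1, 2, 1%Z); (1, 4, (-1)%Z); (6, 4, 1%Z)]);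
                     (4, [:: (1, 1, 1%Z); (6, 1, (-1)%Z); (6, 3, 1%Z)]);
                     (5, [:: (6, 4, 1%Z)]);
                     (6, [:: (1, 5, 1%Z)]);
                     (7, [:: (1, 1, 1%Z); (1, 3, (-1)%Z); (1, 6, 1%Z); (6, 1, (-1)%Z);
                             (6, 3, 1%Z)])];
     a2_coefs := [:: (1, 4, [:: (1, 4, 1%Z); (6, 4, (-1)%Z)]);
                     (1, 5, [:: (1, 1, (-1)%Z); (1, 3, 1%Z); (6, 1, 1%Z); (6, 3, (-1)%Z)]);
                     (6, 8, [:: (1, 1, (-1)%Z); (6, 1, 1%Z)]);
                     (6, 10, [:: (1, 2, (-1)%Z); (1, 4, 1%Z); (6, 2, 1%Z); (6, 4, (-1)%Z)])];
     multipliers := [:: (6, 6, [:: (0, (-1)%Z)])] |}.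

Definition cert_p23 : local_cert :=
  {| tests := [:: (3, ann4)];
     a0_coefs := [:: (2, [:: (2, 0, 1%Z); (2, 1, 1%Z); (2, 3, (-1)%Z); (2, 4, (-1)%Z);
                             (3, 0, (-1)%Z); (3, 1, (-1)%Z); (3, 3, 1%Z); (3, 4, 1%Z)]);
                     (3, [:: (2, 0, 1%Z); (2, 2, (-1)%Z); (2, 3, (-1)%Z); (2, 5, 1%Z);
                             (3, 0, (-1)%Z); (3, 2, 1%Z); (3, 3, 1%Z); (3, 5, (-1)%Z)])];
     a1_coefs := [:: (1, [:: (2, 0, 1%Z)]);
                     (2, [:: (3, 1, 1%Z)]);
                     (3, [:: (2, 2, 1%Z)]);
                     (4, [:: (3, 3, 1%Z)]);
                     (5, [:: (2, 0, 1%Z); (3, 0, (-1)%Z); (3, 4, 1%Z)]);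
                     (6, [:: (2, 3, (-1)%Z); (2, 5, 1%Z); (3, 3, 1%Z)]);
                     (7, [:: (2, 0, 1%Z); (2, 4, (-1)%Z); (2, 6, 1%Z); (3, 0, (-1)%Z);
                             (3, 4, 1%Z)])];
     a2_coefs := [:: (2, 8, [:: (2, 3, 1%Z); (3, 3, (-1)%Z)]);
                     (2, 9, [:: (2, 0, (-1)%Z); (2, 4, 1%Z); (3, 0, 1%Z); (3, 4, (-1)%Z)]);
                     (3, 4, [:: (2, 0, (-1)%Z); (3, 0, 1%Z)]);
                     (3, 10, [:: (2, 3, 1%Z); (2, 5, (-1)%Z); (3, 3, (-1)%Z); (3, 5, 1%Z)])];
     multipliers := [:: (3, 6, [:: (0, 1%Z)])] |}.

Definition cert_p246 : local_cert :=
  {| tests := [:: (6, ann5); (4, ann3); (6, ann6)];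
     a0_coefs := [:: (2, [:: (2, 1, 1%Z); (2, 2, (-1)%Z); (2, 3, (-1)%Z); (2, 4, (-1)%Z);
                             (4, 2, 1%Z); (6, 1, (-1)%Z); (6, 3, 1%Z); (6, 4, 1%Z)]);
                     (4, [:: (2, 0, 1%Z); (4, 0, (-1)%Z); (4, 1, (-1)%Z); (4, 3, 1%Z);
                             (4, 4, (-1)%Z); (6, 1, 1%Z); (6, 3, (-1)%Z); (6, 4, 1%Z)]);
                     (6, [:: (2, 0, 1%Z); (2, 3, 1%Z); (2, 4, (-1)%Z); (2, 5, (-1)%Z);
                             (2, 6, 1%Z); (6, 0, (-1)%Z); (6, 3, (-1)%Z); (6, 4, 1%Z);
                             (6, 5, 1%Z); (6, 6, (-1)%Z)])];
     a1_coefs := [:: (1, [:: (2, 0, 1%Z)]);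
                     (2, [:: (6, 1, 1%Z)]);
                     (3, [:: (4, 2, 1%Z)]);
                     (4, [:: (6, 3, 1%Z)]);
                     (5, [:: (6, 4, 1%Z)]);
                     (6, [:: (2, 3, (-1)%Z); (2, 5, 1%Z); (6, 3, 1%Z)]);
                     (7, [:: (2, 4, (-1)%Z); (2, 6, 1%Z); (6, 4, 1%Z)])];
     a2_coefs := [:: (2, 7, [:: (2, 2, 1%Z); (4, 2, (-1)%Z)]);
                     (2, 8, [:: (2, 3, 1%Z); (6, 3, (-1)%Z)]);
                     (2, 9, [:: (2, 4, 1%Z); (6, 4, (-1)%Z)]);
                     (4, 5, [:: (2, 0, (-1)%Z); (4, 0, 1%Z)]);
                     (4, 8, [:: (4, 1, 1%Z); (6, 1, (-1)%Z)]);
                     (4, 11, [:: (4, 4, 1%Z); (6, 4, (-1)%Z)]);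
                     (6, 6, [:: (2, 0, (-1)%Z); (6, 0, 1%Z)]);
                     (6, 10, [:: (2, 4, 1%Z); (2, 6, (-1)%Z); (6, 4, (-1)%Z); (6, 6, 1%Z)])];
     multipliers := [:: (4, 5, [:: (0, (-1)%Z)]);
                     (4, 6, [:: (1, 1%Z); (2, (-1)%Z)]);
                     (6, 2, [:: (2, 1%Z)])] |}.

Definition cert_p257 : local_cert :=
  {| tests := [:: (5, ann7); (5, ann1); (7, ann6)];
     a0_coefs := [:: (2, [:: (2, 0, 2%Z); (2, 1, 1%Z); (2, 2, (-1)%Z); (2, 3, (-1)%Z);
                             (2, 4, (-1)%Z); (5, 0, (-1)%Z); (5, 2, 1%Z); (7, 0, (-1)%Z);
                             (7, 1, (-1)%Z); (7, 3, 1%Z); (7, 4, 1%Z)]);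
                     (5, [:: (2, 0, 2%Z); (5, 0, (-1)%Z); (5, 1, (-1)%Z); (5, 3, (-1)%Z);
                             (5, 4, 1%Z); (7, 0, (-1)%Z); (7, 1, 1%Z); (7, 3, 1%Z);
                             (7, 4, (-1)%Z)]);
                     (7, [:: (2, 0, 2%Z); (2, 3, (-1)%Z); (2, 4, 1%Z); (2, 5, 1%Z);
                             (2, 6, (-1)%Z); (7, 0, (-2)%Z); (7, 3, 1%Z); (7, 4, (-1)%Z);
                             (7, 5, (-1)%Z); (7, 6, 1%Z)])];
     a1_coefs := [:: (1, [:: (2, 0, 1%Z)]);
                     (2, [:: (7, 1, 1%Z)]);
                     (3, [:: (2, 0, 1%Z); (5, 0, (-1)%Z); (5, 2, 1%Z)]);
                     (4, [:: (2, 0, 1%Z); (7, 0, (-1)%Z); (7, 3, 1%Z)]);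
                     (5, [:: (7, 4, 1%Z)]);
                     (6, [:: (2, 0, 1%Z); (2, 3, (-1)%Z); (2, 5, 1%Z); (7, 0, (-1)%Z);
                             (7, 3, 1%Z)]);
                     (7, [:: (2, 4, (-1)%Z); (2, 6, 1%Z); (7, 4, 1%Z)])];
     a2_coefs := [:: (2, 7, [:: (2, 0, (-1)%Z); (2, 2, 1%Z); (5, 0, 1%Z); (5, 2, (-1)%Z)]);
                     (2, 8, [:: (2, 0, (-1)%Z); (2, 3, 1%Z); (7, 0, 1%Z); (7, 3, (-1)%Z)]);
                     (2, 9, [:: (2, 4, 1%Z); (7, 4, (-1)%Z)]);
                     (5, 4, [:: (2, 0, (-1)%Z); (5, 0, 1%Z)]);
                     (5, 9, [:: (5, 1, 1%Z); (7, 1, (-1)%Z)]);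
                     (5, 11, [:: (2, 0, (-1)%Z); (5, 3, 1%Z); (7, 0, 1%Z); (7, 3, (-1)%Z)]);
                     (7, 5, [:: (2, 0, (-1)%Z); (7, 0, 1%Z)]);
                     (7, 10, [:: (2, 0, (-1)%Z); (2, 3, 1%Z); (2, 5, (-1)%Z); (7, 0, 1%Z);
                                 (7, 3, (-1)%Z); (7, 5, 1%Z)])];
     multipliers := [:: (5, 5, [:: (2, (-1)%Z)]);
                     (5, 6, [:: (0, (-1)%Z)]);
                     (7, 2, [:: (1, 1%Z); (2, 1%Z)])] |}.

Definition cert_p367 : local_cert :=
  {| tests := [:: (6, ann8); (7, ann1); (6, ann6)];
     a0_coefs := [:: (3, [:: (3, 0, (-1)%Z); (3, 1, (-1)%Z); (3, 2, 1%Z); (3, 3, 1%Z);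
                             (3, 5, (-1)%Z); (6, 4, 1%Z); (7, 0, 1%Z); (7, 1, 1%Z);
                             (7, 2, (-1)%Z); (7, 3, (-1)%Z); (7, 4, (-1)%Z); (7, 5, 1%Z)]);
                     (6, [:: (3, 3, 2%Z); (6, 0, (-1)%Z); (6, 2, (-1)%Z); (6, 3, (-1)%Z);
                             (6, 5, 1%Z); (7, 0, 1%Z); (7, 2, 1%Z); (7, 3, (-1)%Z);
                             (7, 5, (-1)%Z)]);
                     (7, [:: (3, 3, 1%Z); (3, 5, 1%Z); (3, 6, (-1)%Z); (6, 4, 1%Z);
                             (7, 3, (-1)%Z); (7, 4, (-1)%Z); (7, 5, (-1)%Z); (7, 6, 1%Z)])];
     a1_coefs := [:: (1, [:: (3, 3, 1%Z); (7, 0, 1%Z); (7, 3, (-1)%Z)]);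
                     (2, [:: (6, 4, 1%Z); (7, 1, 1%Z); (7, 4, (-1)%Z)]);
                     (3, [:: (7, 2, 1%Z)]);
                     (4, [:: (3, 3, 1%Z)]);
                     (5, [:: (6, 4, 1%Z)]);
                     (6, [:: (7, 5, 1%Z)]);
                     (7, [:: (3, 5, (-1)%Z); (3, 6, 1%Z); (7, 5, 1%Z)])];
     a2_coefs := [:: (3, 4, [:: (3, 0, 1%Z); (3, 3, (-1)%Z); (7, 0, (-1)%Z); (7, 3, 1%Z)]);
                     (3, 7, [:: (3, 1, 1%Z); (6, 4, (-1)%Z); (7, 1, (-1)%Z); (7, 4, 1%Z)]);
                     (3, 10, [:: (3, 5, 1%Z); (7, 5, (-1)%Z)]);
                     (6, 6, [:: (3, 3, (-1)%Z); (6, 0, 1%Z); (7, 0, (-1)%Z); (7, 3, 1%Z)]);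
                     (6, 8, [:: (3, 3, (-1)%Z); (6, 3, 1%Z)]);
                     (6, 10, [:: (6, 2, 1%Z); (7, 2, (-1)%Z)]);
                     (7, 5, [:: (3, 3, (-1)%Z); (7, 3, 1%Z)]);
                     (7, 9, [:: (6, 4, (-1)%Z); (7, 4, 1%Z)])];
     multipliers := [:: (3, 4, [:: (1, (-1)%Z)]);
                     (6, 1, [:: (2, 1%Z)]);
                     (6, 6, [:: (0, 1%Z)])] |}.

Definition cert_p45 : local_cert :=
  {| tests := [:: (5, ann9)];
     a0_coefs := [:: (4, [:: (4, 0, (-1)%Z); (4, 2, 1%Z); (4, 3, 1%Z); (4, 5, (-1)%Z);
                             (5, 0, 1%Z); (5, 2, (-1)%Z); (5, 3, (-1)%Z); (5, 5, 1%Z)]);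
                     (5, [:: (4, 1, 1%Z); (4, 2, 1%Z); (4, 4, (-1)%Z); (4, 5, (-1)%Z);
                             (5, 1, (-1)%Z); (5, 2, (-1)%Z); (5, 4, 1%Z); (5, 5, 1%Z)])];
     a1_coefs := [:: (1, [:: (4, 2, 1%Z); (5, 0, 1%Z); (5, 2, (-1)%Z)]);
                     (2, [:: (4, 1, 1%Z); (4, 5, (-1)%Z); (5, 5, 1%Z)]);
                     (3, [:: (4, 2, 1%Z)]);
                     (4, [:: (5, 3, 1%Z)]);
                     (5, [:: (4, 4, 1%Z)]);
                     (6, [:: (5, 5, 1%Z)]);
                     (7, [:: (4, 0, (-1)%Z); (4, 2, 1%Z); (4, 6, 1%Z); (5, 0, 1%Z);
                             (5, 2, (-1)%Z)])];
     a2_coefs := [:: (4, 5, [:: (4, 0, 1%Z); (4, 2, (-1)%Z); (5, 0, (-1)%Z); (5, 2, 1%Z)]);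
                     (4, 8, [:: (4, 5, 1%Z); (5, 5, (-1)%Z)]);
                     (5, 4, [:: (4, 2, (-1)%Z); (5, 2, 1%Z)]);
                     (5, 9, [:: (4, 1, (-1)%Z); (4, 5, 1%Z); (5, 1, 1%Z); (5, 5, (-1)%Z)])];
     multipliers := [:: (5, 6, [:: (0, 1%Z)])] |}.

Definition cert_at (q : point) : local_cert :=
  match nat_of_ord q with
  | 4 => cert_p135 | 5 => cert_p147 | 6 => cert_p16 | 7 => cert_p23
  | 8 => cert_p246 | 9 => cert_p257 | 10 => cert_p367 | 11 => cert_p45
  | _ => LocalCert [::] [::] [::] [::] [::]
  end%N.

Lemma cert_at_ok q : cert_ok q (cert_at q).
Proof.
move: q; apply: all_ords.
rewrite /cert_ok /R3_annihilator /cert_defect /cert_rhs /test_form /wsum /lsum /tau3.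
rewrite !index_enum_ords !unlock.
vm_cast_no_check (erefl true).
Qed.

Lemma sum_a0E (c0 : line -> point -> int) j q k : inA j q ->
  \sum_(i : line) \sum_(p : point | inA i p) c0 i p * a0 i p j q k = c0 j q * xcoef j k.
Proof.
move=> hA; rewrite (bigD1 j) //= [X in _ + X]big1 ?addr0 => [|i ni]; last first.
  by apply: big1 => p _; rewrite /a0 (eq_sym j) (negPf ni) mul0r mulr0.
rewrite (bigD1 q) //= [X in _ + X]big1 ?addr0 => [|p /andP[_ np]]; last first.
  by rewrite /a0 (eq_sym q) (negPf np) andbF mul0r mulr0.
by rewrite /a0 !eqxx mul1r.
Qed.

Lemma sum_a1E (c1 : line -> point -> int) j q k : inP0 q ->
  \sum_(i : line | nat_of_ord i != 0%N) \sum_(p : point | inP0 p) c1 i p * a1 i p j q k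
  = \sum_(i : line | nat_of_ord i != 0%N) c1 i q * xcoef i k.
Proof.
move=> hq; apply: eq_bigr => i _.
rewrite (bigD1 q) //= [X in _ + X]big1 ?addr0 => [|p /andP[_ np]]; last first.
  by rewrite /a1 (eq_sym q) (negPf np) mul0r mulr0.
by rewrite /a1 eqxx mul1r.
Qed.

Lemma sum_a2E (c2 : line -> point -> point -> int) j q k : inA j q ->
  \sum_(i : line | nat_of_ord i != 0%N) \sum_(p1 : point | inP0 p1 && inc p1 i)
     \sum_(p2 : point | inP0 p2 && inc p2 i) c2 i p1 p2 * a2 i p1 p2 j q k
  = \sum_(p2 : point | inP0 p2 && inc p2 j) c2 j q p2 * Scoef p2 k.
Proof.
case/and3P=> hj hq hqj; rewrite (bigD1 j) //= [X in _ + X]big1 ?addr0 => [|i /andP[_ ni]].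
  rewrite (bigD1 q) /= ?hq ?hqj // [X in _ + X]big1 ?addr0 => [|p1 /andP[_ np]].
    by apply: eq_bigr => p2 _; rewrite /a2 !eqxx mul1r.
  by apply: big1 => p2 _; rewrite /a2 (eq_sym q) (negPf np) andbF mul0r mulr0.
apply: big1 => p1 _; apply: big1 => p2 _.
by rewrite /a2 (eq_sym j) (negPf ni) mul0r mulr0.
Qed.

Definition local_part (a : Ael) (p : point) : line -> Hel := fun j k => (inc p j)%:R * a j p k.

Lemma ker_tau_inU a : in_ker_tau a -> inU a.
Proof.
move=> hker.
exists (fun (i : line) p => lsum (lookup (a0_coefs (cert_at p)) i) (local_part a p)),
       (fun (i : line) p => lsum (lookup (a1_coefs (cert_at p)) i) (local_part a p)),
       (fun (i : line) p1 p2 =>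
          lsum (lookup (a2_coefs (cert_at p1)) (nat_of_ord i, nat_of_ord p2)) (local_part a p1)).
move=> j q hA k; have [_ hq hqj] := and3P hA.
rewrite sum_a0E // sum_a1E // sum_a2E //.
have <- : local_part a q j k = a j q k by rewrite /local_part hqj mul1r.
apply: (cert_okP (cert_at_ok q)) => // [j' k' /negPf nj|i hi].
  by rewrite /local_part nj mul0r.
apply: inR3c_ext (ker_tau_inA hker hi) => x y z.
apply: eq_tau3_local => [|j' hj' k']; first by case/and3P: hi.
by rewrite /local_part hj' mul1r.
Qed.

Theorem lemma3p3 : forall a : Ael, inU a <-> in_ker_tau a.
Proof. by move=> a; split; [apply: inU_ker_tau | apply: ker_tau_inU]. Qed.
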